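(* In the insurance game built on any stag hunt, the profile $A^n$ is the unique weakly maximal state and the unique strongly maximal state; in particular the insurance game is weakly acyclic.
   Context: A stag hunt has players $I=\{1,\dots,n\}$ with strategies $\{A,D\}$, a constant $c\in\mathbb{R}$ and, for each $i$, a function $f_i$ on subsets $T\subseteq I$ with $i\in T$, strictly increasing with respect to inclusion, with $f_i(I)>c$ and $f_i(\{i\})<c$; an adopter gets $f_i(T)$ where $T$ is the set of adopters, and a defector gets $c$. The insurance game built on it has players $I$, each with strategies $\{A,D,X\}$. For a profile $s$ let $T(s)=\{j: s_j\in\{A,X\}\}$. Each player $i$ has premium $\pi_i>0$ and reimbursement $R_i$; payoffs are $u_i(s)=c$ if $s_i=D$; $f_i(T(s))$ if $s_i=A$; $f_i(T(s))-\pi_i+R_i\cdot\mathbf{1}[T(s)\neq I]$ if $s_i=X$; with $\pi_i<f_i(I)-c$ and $f_i(T)-\pi_i+R_i>c$ for all $T$ with $i\in T\neq I$. For a profile $s$, $(s_i',s_{-i})$ is $s$ with player $i$'s strategy replaced by $s_i'$. A pure Nash equilibrium is $s$ with $u_i(s)\ge u_i(s_i',s_{-i})$ for all $i,s_i'$. The strict deployment graph has vertex set the profiles and an arc $(s,s')$ iff $s'=(s_i',s_{-i})$ for some $i$ with $u_i(s')>u_i(s)$; the ordinal deployment graph has an arc $(s,s')$, $s'\neq s$, iff $s'=(s_i',s_{-i})$ for some $i$ with $u_i(s')\ge u_i(s)$. For either graph define $s\succeq s'$ iff there is a directed path (possibly of length $0$) from $s'$ to $s$, and $s\succ s'$ iff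 $s\succeq s'$ and not $s'\succeq s$; $s^*$ is maximal if no $s$ satisfies $s\succ s^*$. Weakly (resp. strongly) maximal states are maximal states for the strict (resp. ordinal) deployment graph. A game is weakly acyclic if all its weakly maximal states are pure Nash equilibria. *)

From HB Require Import structures.
From mathcomp Require Import all_boot all_order all_algebra.
Set Implicit Arguments. Unset Strict Implicit. Unset Printing Implicit Defensive.
Import Order.TTheory GRing.Theory Num.Theory.
Local Open Scope ring_scope.

(* Strategies of the insurance game: A (adopt), D (defect), X (adopt + insure). *)
Inductive strat := SA | SD | SX.

Definition strat_to (s : strat) : 'I_3 :=
  match s with SA => inord 0 | SD => inord 1 | SX => inord 2 end.
Definition strat_of (i : 'I_3) : strat :=
  match val i with 0 => SA | 1 => SD | _ => SX end.
Lemma stratK : cancel strat_to strat_of.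
Proof. by case; rewrite /strat_of /= inordK. Qed.

HB.instance Definition _ := Equality.copy strat (can_type stratK).
HB.instance Definition _ := Choice.copy strat (can_type stratK).
HB.instance Definition _ := Countable.copy strat (can_type stratK).
HB.instance Definition _ := Finite.copy strat (can_type stratK).

Definition profile (n : nat) := {ffun 'I_n -> strat}.

Definition allA (n : nat) : profile n := [ffun _ => SA].

Definition upd n (s : profile n) (i : 'I_n) (a : strat) : profile n :=
  [ffun j => if j == i then a else s j].

Definition adopters n (s : profile n) : {set 'I_n} := [set j | s j != SD].

(* Stag hunt hypotheses on (c, f). f i T is only meaningful when i \in T. *)
Definition stag_hunt (R : realFieldType) n (c : R) (f : 'I_n -> {set 'I_n} -> R) :=
  [/\ forall i (T T' : {set 'I_n}), i \in T -> T \proper T' -> f i T < f i T',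
      forall i, c < f i [set: 'I_n] &
      forall i, f i [set i] < c].

Definition insurance_params (R : realFieldType) n (c : R)
  (f : 'I_n -> {set 'I_n} -> R) (pi Rm : 'I_n -> R) :=
  [/\ forall i, 0 < pi i,
      forall i, pi i < f i [set: 'I_n] - c &
      forall i (T : {set 'I_n}), i \in T -> T != [set: 'I_n] ->
        c < f i T - pi i + Rm i].

Definition ins_payoff (R : realFieldType) n (c : R)
  (f : 'I_n -> {set 'I_n} -> R) (pi Rm : 'I_n -> R)
  (s : profile n) (i : 'I_n) : R :=
  match s i with
  | SD => c
  | SA => f i (adopters s)
  | SX => f i (adopters s) - pi i
          + (if adopters s != [set: 'I_n] then Rm i else 0)
  end.

Section Deployment.
Variables (R : realFieldType) (n : nat).
Variable u : profile n -> 'I_n -> R.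

Definition strict_arc : rel (profile n) := fun s s' =>
  [exists i, [exists a, (s' == upd s i a) && (u s i < u s' i)]].

Definition ordinal_arc : rel (profile n) := fun s s' =>
  (s' != s) && [exists i, [exists a, (s' == upd s i a) && (u s i <= u s' i)]].

Definition dge (e : rel (profile n)) (s s' : profile n) : bool := connect e s' s.
Definition dgt (e : rel (profile n)) (s s' : profile n) : bool :=
  dge e s s' && ~~ dge e s' s.

Definition maximal (e : rel (profile n)) (s : profile n) : Prop :=
  ~ exists s', dgt e s' s.

Definition weakly_maximal := maximal strict_arc.
Definition strongly_maximal := maximal ordinal_arc.

Definition pure_nash (s : profile n) : Prop :=
  forall i a, u (upd s i a) i <= u s i.

Definition weakly_acyclic : Prop :=
  forall s, weakly_maximal s -> pure_nash s.
End Deployment.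

From mathcomp Require Import all_boot all_order all_algebra.
From mathcomp Require Import lra zify.
Set Implicit Arguments. Unset Strict Implicit. Unset Printing Implicit Defensive.
Import Order.TTheory GRing.Theory Num.Theory.
Local Open Scope ring_scope.

(* From every profile other than A^n some player has a strictly improving
   deviation that lowers the potential #X + 2 #D: a defector gains by switching
   to X (insurance pays off unless everybody adopts, and then f_i(I) - pi_i > c),
   and once nobody defects an insured player gains pi_i by dropping insurance.
   Hence A^n is reachable from everywhere in the strict deployment graph.
   Conversely every unilateral deviation from A^n is strictly worse, so A^n has
   no outgoing arc even in the ordinal graph.  A vertex that is reachable from
   everywhere and has no outgoing arc is the unique maximal state. *)

Section SinkMaximal.
Variables (n : nat) (e : rel (profile n)) (s0 : profile n).

Lemma connect_from_sink : (forall s, ~~ e s0 s) -> forall s, connect e s0 s -> s = s0.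
Proof.
move=> no_arc s /connectP [[|x p] /= path_p ->] //.
by move: path_p (no_arc x) => /andP [->].
Qed.

Hypothesis reach_s0 : forall s, connect e s s0.
Hypothesis s0_sink : forall s, connect e s0 s -> s = s0.

Lemma sink_maximal : maximal e s0.
Proof. by case=> s /andP [_]; rewrite /dge reach_s0. Qed.

Lemma maximal_sink_eq s : maximal e s -> s = s0.
Proof.
move=> max_s; case: (eqVneq s s0) => // neq_s; case: max_s.
exists s0; rewrite /dgt /dge reach_s0 /=; apply/negP => /s0_sink eq_s.
by rewrite eq_s eqxx in neq_s.
Qed.

End SinkMaximal.

Lemma strict_sub_ordinal (R : realFieldType) n (u : profile n -> 'I_n -> R) :
  subrel (strict_arc u) (ordinal_arc u).
Proof.
move=> s s' /existsP [i /existsP [a /andP [/eqP def_s' gain]]].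
apply/andP; split.
  by apply: contraTneq gain => ->; rewrite ltxx.
by apply/existsP; exists i; apply/existsP; exists a; rewrite def_s' eqxx -def_s' (ltW gain).
Qed.

Lemma connect_strict_ordinal (R : realFieldType) n (u : profile n -> 'I_n -> R) :
  subrel (connect (strict_arc u)) (connect (ordinal_arc u)).
Proof. by apply: connect_sub => s s' /strict_sub_ordinal; apply: connect1. Qed.

Lemma strict_arc_upd (R : realFieldType) n (u : profile n -> 'I_n -> R) s i a :
  u s i < u (upd s i a) i -> strict_arc u s (upd s i a).
Proof. by move=> gain; apply/existsP; exists i; apply/existsP; exists a; rewrite eqxx. Qed.

(* Equality on [strat] is transported from ['I_3] and does not reduce by
   computation. *)
Lemma strat_eqE (a b : strat) :
  (a == b) = match a, b with SA, SA | SD, SD | SX, SX => true | _, _ => false end.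
Proof. by case: a; case: b; apply/eqP. Qed.

Lemma updE n (s : profile n) i a j : upd s i a j = if j == i then a else s j.
Proof. by rewrite ffunE. Qed.

Lemma adopters_full n (s : profile n) :
  (forall j, s j != SD) -> adopters s = [set: 'I_n].
Proof. by move=> no_defector; apply/setP => j; rewrite !inE no_defector. Qed.

Lemma allAE n (j : 'I_n) : allA n j = SA.
Proof. by rewrite ffunE. Qed.

Lemma adopters_allA n : adopters (allA n) = [set: 'I_n].
Proof. by apply: adopters_full => j; rewrite allAE strat_eqE. Qed.

Lemma adopters_upd_allA n i a : a != SD -> adopters (upd (allA n) i a) = [set: 'I_n].
Proof.
move=> a_adopts; apply: adopters_full => j.
by rewrite updE allAE; case: (j == i); rewrite // strat_eqE.
Qed.

Lemma upd_allA_A n i : upd (allA n) i SA = allA n.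
Proof. by apply/ffunP => j; rewrite updE allAE; case: (j == i). Qed.

Definition defection_weight (a : strat) : nat :=
  match a with SA => 0 | SX => 1 | SD => 2 end.

Definition defection_potential n (s : profile n) : nat :=
  (\sum_j defection_weight (s j))%N.

Lemma defection_potential_upd n (s : profile n) i a :
  (defection_potential (upd s i a) + defection_weight (s i) =
   defection_potential s + defection_weight a)%N.
Proof.
rewrite /defection_potential (bigD1 i) //= [in RHS](bigD1 i) //= updE eqxx.
rewrite (eq_bigr (fun j => defection_weight (s j))) => [|j /negbTE j_neq]; last first.
  by rewrite updE j_neq.
by rewrite addnAC [RHS]addnC addnA.
Qed.

Lemma defection_potential_upd_lt n (s : profile n) i a :
  (defection_weight a < defection_weight (s i))%N ->
  (defection_potential (upd s i a) < defection_potential s)%N.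
Proof. by have := defection_potential_upd s i a; lia. Qed.

Section InsuranceGame.
Variables (R : realFieldType) (n : nat) (c : R).
Variables (f : 'I_n -> {set 'I_n} -> R) (pi Rm : 'I_n -> R).
Hypothesis pi_gt0 : forall i, 0 < pi i.
Hypothesis pi_lt_surplus : forall i, pi i < f i [set: 'I_n] - c.
Hypothesis insured_gt_c :
  forall i (T : {set 'I_n}), i \in T -> T != [set: 'I_n] -> c < f i T - pi i + Rm i.

Local Notation u := (ins_payoff c f pi Rm).

Lemma defector_gains_by_insuring (s : profile n) i : s i = SD -> u s i < u (upd s i SX) i.
Proof.
move=> s_i; rewrite /ins_payoff s_i updE eqxx.
have i_adopts : i \in adopters (upd s i SX) by rewrite inE updE eqxx strat_eqE.
case: eqP => [->|/eqP not_full] /=; last exact: insured_gt_c.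
by have := pi_lt_surplus i; lra.
Qed.

Lemma insured_gains_by_dropping (s : profile n) i :
  (forall j, s j != SD) -> s i = SX -> u s i < u (upd s i SA) i.
Proof.
move=> no_defector s_i; rewrite /ins_payoff s_i updE eqxx.
have full_after : adopters (upd s i SA) = [set: 'I_n].
  by apply: adopters_full => j; rewrite updE; case: (j == i); rewrite // strat_eqE.
rewrite full_after adopters_full // eqxx /=.
by have := pi_gt0 i; lra.
Qed.

Lemma improving_deviation (s : profile n) : s != allA n ->
  exists i a, strict_arc u s (upd s i a) /\
              (defection_potential (upd s i a) < defection_potential s)%N.
Proof.
move=> neq_s; case: (pickP (fun j => s j == SD)) => [i /eqP s_i | no_defector].
  exists i, SX; split; first by apply/strict_arc_upd/defector_gains_by_insuring.
  by apply: defection_potential_upd_lt; rewrite s_i.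
case: (pickP (fun j => s j == SX)) => [i /eqP s_i | no_insured].
  exists i, SA; split; last by apply: defection_potential_upd_lt; rewrite s_i.
  by apply/strict_arc_upd/insured_gains_by_dropping => // j; rewrite no_defector.
suff s_allA : s = allA n by rewrite s_allA eqxx in neq_s.
apply/ffunP => j; rewrite allAE.
by move: (no_defector j) (no_insured j); rewrite !strat_eqE; case: (s j).
Qed.

Lemma connect_allA (s : profile n) : connect (strict_arc u) s (allA n).
Proof.
elim: {s}(defection_potential s).+1 {-2}s (ltnSn (defection_potential s)) => // k IH s.
case: (eqVneq s (allA n)) => [-> _|neq_s lt_k]; first exact: connect0.
have [i [a [arc lt_potential]]] := improving_deviation neq_s.
by apply: connect_trans (connect1 arc) (IH _ _); lia.
Qed.

Lemma allA_deviation_loss (i : 'I_n) a : a != SA -> u (upd (allA n) i a) i < u (allA n) i.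
Proof.
move=> not_A; have := pi_gt0 i; have := pi_lt_surplus i.
rewrite /ins_payoff updE eqxx allAE adopters_allA.
case: a not_A => [|_|_]; rewrite ?eqxx //= ?adopters_upd_allA ?strat_eqE ?eqxx //=; lra.
Qed.

Lemma allA_pure_nash : pure_nash u (allA n).
Proof.
move=> i a; case: (eqVneq a SA) => [->|/allA_deviation_loss/ltW //].
by rewrite upd_allA_A.
Qed.

Lemma allA_no_ordinal_arc (s : profile n) : ~~ ordinal_arc u (allA n) s.
Proof.
apply/negP => /andP [neq_s /existsP [i /existsP [a /andP [/eqP def_s le_u]]]].
move: neq_s le_u; rewrite def_s.
case: (eqVneq a SA) => [->|/allA_deviation_loss loss]; first by rewrite upd_allA_A eqxx.
by rewrite leNgt loss.
Qed.

End InsuranceGame.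

Theorem theorem6 (R : realFieldType) (n : nat) (c : R)
  (f : 'I_n -> {set 'I_n} -> R) (pi Rm : 'I_n -> R) :
  stag_hunt c f ->
  insurance_params c f pi Rm ->
  let u := ins_payoff c f pi Rm in
  (weakly_maximal u (allA n) /\ (forall s, weakly_maximal u s -> s = allA n)) /\
  (strongly_maximal u (allA n) /\ (forall s, strongly_maximal u s -> s = allA n)) /\
  weakly_acyclic u.
Proof.
move=> _ [pi_gt0 pi_lt_surplus insured_gt_c] u.
have reach_strict := connect_allA pi_gt0 pi_lt_surplus insured_gt_c.
have reach_ordinal s : connect (ordinal_arc u) s (allA n).
  exact/connect_strict_ordinal/reach_strict.
have sink_ordinal := connect_from_sink (allA_no_ordinal_arc Rm pi_gt0 pi_lt_surplus).
have sink_strict s : connect (strict_arc u) (allA n) s -> s = allA n.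
  by move/connect_strict_ordinal; apply: sink_ordinal.
have weak_unique := maximal_sink_eq reach_strict sink_strict.
split; first by split; [exact: sink_maximal reach_strict | exact: weak_unique].
split; first by split; [exact: sink_maximal reach_ordinal |
                        exact: maximal_sink_eq reach_ordinal sink_ordinal].
by move=> s /weak_unique ->; apply: allA_pure_nash.
Qed.
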